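(* Let $\theta_0\in\,]0,\pi/2[$ and $\kappa>0$, and define $F(\theta)=G'(\theta)\tan\theta-G(\theta)$ for $\theta\in[\theta_0,\pi/2[$. Then for every $z\in\,]-\infty,\,e^{-\kappa}-1]$ the equation $F(\theta)=z$ has a unique solution $\theta=\varphi(z)\in[\theta_0,\pi/2[$.
   Context: For $\theta\in[\theta_0,\pi/2]$, $G(\theta)=\Big(1-\exp\Big\{\frac{-\kappa}{\cos(\theta-\theta_0)}\Big\}\Big)\cos(\theta-\theta_0)$. *)

From Stdlib Require Import Reals Lra.
Open Scope R_scope.

Definition G (kappa theta0 : R) (theta : R) : R :=
  (1 - exp (- kappa / cos (theta - theta0))) * cos (theta - theta0).

(* F(θ) = z, where F(θ) = G'(θ) tan θ - G(θ); G' is the derivative of G,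
   expressed through Stdlib's derivable_pt_lim (so "F(θ) = z" means: G is
   differentiable at θ with derivative d, and d * tan θ - G θ = z). *)
Definition F_eq (kappa theta0 theta z : R) : Prop :=
  exists d : R, derivable_pt_lim (G kappa theta0) theta d /\
                d * tan theta - G kappa theta0 theta = z.

From Stdlib Require Import Reals Lra.
From Coquelicot Require Import Coquelicot.
Open Scope R_scope.

(* Write u = θ - θ0, c = cos u, s = sin u and E = exp (-κ/c).  On [θ0, π/2[
   we have c > 0, s >= 0 and tan θ > 0.  Direct differentiation gives
     G'  = - s (1 - E (1 + κ/c)),
     G'' = - c (1 - E (1 + κ/c)) - s² E κ² / c³,
   and the elementary inequality e^(-x) (1 + x) < 1 (x > 0) shows G' <= 0 and
   G'' < 0.  Hence F = G' tan - G has derivative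
     F' = G'' tan + G' (1 + tan²) - G' = G'' tan + G' tan² < 0,
   so F is strictly decreasing on [θ0, π/2[.  Moreover F(θ0) = e^(-κ) - 1, and
   F is unbounded below near π/2 because G >= 0, G' is bounded away from 0
   away from θ0, and tan θ -> +∞.  The theorem then follows from the
   intermediate value theorem for a continuous strictly decreasing function.
   The file first proves the two general real-analysis facts (monotonicity
   from a negative derivative, unique preimage of a decreasing function), then
   the computations on G and F, and finally the theorem. *)

Lemma decreasing_of_neg_derivative (f f' : R -> R) (a b : R) :
  (forall t, a <= t < b -> derivable_pt_lim f t (f' t)) ->
  (forall t, a <= t < b -> f' t < 0) ->
  forall x y, a <= x -> x < y -> y < b -> f y < f x.
Proof.
  intros Hder Hneg x y Hax Hxy Hyb.
  destruct (MVT_cor2 f f' x y Hxy) as [c [Hmvt Hc]].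
  { intros c Hc. apply Hder. lra. }
  assert (f' c < 0) by (apply Hneg; lra).
  assert (f' c * (y - x) < 0) by nra.
  lra.
Qed.

Lemma decreasing_unique_preimage (f : R -> R) (a b z : R) :
  (forall t, a <= t < b -> continuity_pt f t) ->
  (forall x y, a <= x -> x < y -> y < b -> f y < f x) ->
  z <= f a -> (exists t, a <= t < b /\ f t < z) ->
  exists! t, (a <= t < b) /\ f t = z.
Proof.
  intros Hcont Hdecr Hza [c [Hc Hfc]].
  assert (Hex : exists t, (a <= t < b) /\ f t = z).
  { destruct (Req_dec (f a) z) as [Heq | Hneq].
    - exists a. split; [lra | exact Heq].
    - assert (Hac : a < c) by (destruct (Req_dec a c); subst; lra).
      destruct (Ranalysis5.IVT_interv (fun t => z - f t) a c) as [t [Ht Hft]].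
      + intros t Ht. apply continuity_pt_minus.
        * apply continuity_pt_const. intros u v. reflexivity.
        * apply Hcont. lra.
      + exact Hac.
      + lra.
      + lra.
      + exists t. split; lra. }
  destruct Hex as [t [Ht Hft]].
  exists t. split; [split; assumption |].
  intros t' [Ht' Hft'].
  destruct (Rtotal_order t t') as [Hlt | [Heq | Hgt]].
  - assert (f t' < f t) by (apply Hdecr; lra). lra.
  - exact Heq.
  - assert (f t < f t') by (apply Hdecr; lra). lra.
Qed.

Lemma tan_exceeds (a M : R) :
  -PI/2 < a < PI/2 -> exists t, a < t < PI/2 /\ M < tan t.
Proof.
  intros Ha. set (N := Rmax M (tan a) + 1).
  exists (atan N).
  assert (HN1 : M < N) by (unfold N; generalize (Rmax_l M (tan a)); lra).
  assert (HN2 : tan a < N) by (unfold N; generalize (Rmax_r M (tan a)); lra).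
  rewrite tan_atan. split; [split |]; [| generalize (atan_bound N); lra | exact HN1].
  rewrite <- (atan_tan a) at 1 by lra. apply atan_increasing. exact HN2.
Qed.

Lemma exp_neg_mul_one_plus_lt_one (x : R) :
  0 < x -> exp (- x) * (1 + x) < 1.
Proof.
  intros Hx. rewrite exp_Ropp.
  assert (Hlt := exp_ineq1 x (Rgt_not_eq _ _ Hx)).
  assert (He := exp_pos x).
  apply (Rmult_lt_reg_l (exp x)); [exact He |].
  rewrite <- Rmult_assoc, Rinv_r by lra. lra.
Qed.

Definition G_deriv (kappa theta0 t : R) : R :=
  - sin (t - theta0)
  * (1 - exp (- kappa / cos (t - theta0)) * (1 + kappa / cos (t - theta0))).

Definition G_deriv2 (kappa theta0 t : R) : R :=
  - cos (t - theta0)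
    * (1 - exp (- kappa / cos (t - theta0)) * (1 + kappa / cos (t - theta0)))
  - sin (t - theta0) ^ 2 * exp (- kappa / cos (t - theta0))
    * kappa ^ 2 / cos (t - theta0) ^ 3.

Lemma G_has_deriv (kappa theta0 t : R) :
  cos (t - theta0) <> 0 -> is_derive (G kappa theta0) t (G_deriv kappa theta0 t).
Proof.
  intros Hc. unfold G, G_deriv. auto_derive; [exact Hc |].
  unfold Rminus, Rdiv in *. field. exact Hc.
Qed.

Lemma G_deriv_has_deriv (kappa theta0 t : R) :
  cos (t - theta0) <> 0 ->
  is_derive (G_deriv kappa theta0) t (G_deriv2 kappa theta0 t).
Proof.
  intros Hc. unfold G_deriv, G_deriv2. auto_derive; [tauto |].
  unfold Rminus, Rdiv in *. field. exact Hc.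
Qed.

Definition F (kappa theta0 t : R) : R :=
  G_deriv kappa theta0 t * tan t - G kappa theta0 t.

Definition F_deriv (kappa theta0 t : R) : R :=
  G_deriv2 kappa theta0 t * tan t + G_deriv kappa theta0 t * tan t ^ 2.

Section OnTheInterval.

Variables (kappa theta0 : R).
Hypothesis Htheta0 : 0 < theta0 < PI / 2.
Hypothesis Hkappa : 0 < kappa.

Lemma cos_shift_pos (t : R) : theta0 <= t < PI / 2 -> 0 < cos (t - theta0).
Proof. intros Ht. apply cos_gt_0; lra. Qed.

Lemma tan_pos_on (t : R) : theta0 <= t < PI / 2 -> 0 < tan t.
Proof. intros Ht. apply tan_gt_0; lra. Qed.

Lemma deriv_factor_pos (c : R) :
  0 < c -> 0 < 1 - exp (- kappa / c) * (1 + kappa / c).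
Proof.
  intros Hc.
  assert (Hx : 0 < kappa / c) by (apply Rdiv_lt_0_compat; lra).
  replace (- kappa / c) with (- (kappa / c)) by (unfold Rdiv; ring).
  generalize (exp_neg_mul_one_plus_lt_one _ Hx). lra.
Qed.

Lemma G_nonneg (t : R) : theta0 <= t < PI / 2 -> 0 <= G kappa theta0 t.
Proof.
  intros Ht. unfold G. assert (Hc := cos_shift_pos t Ht).
  assert (Hf := deriv_factor_pos _ Hc).
  assert (0 < kappa / cos (t - theta0)) by (apply Rdiv_lt_0_compat; lra).
  assert (0 < exp (- kappa / cos (t - theta0))) by apply exp_pos.
  apply Rmult_le_pos; nra.
Qed.

Lemma G_deriv_nonpos (t : R) : theta0 <= t < PI / 2 -> G_deriv kappa theta0 t <= 0.
Proof.
  intros Ht. unfold G_deriv.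
  assert (0 <= sin (t - theta0)) by (apply sin_ge_0; lra).
  assert (Hf := deriv_factor_pos _ (cos_shift_pos t Ht)).
  nra.
Qed.

Lemma G_deriv2_neg (t : R) : theta0 <= t < PI / 2 -> G_deriv2 kappa theta0 t < 0.
Proof.
  intros Ht. unfold G_deriv2.
  assert (Hc := cos_shift_pos t Ht). assert (Hf := deriv_factor_pos _ Hc).
  set (c := cos (t - theta0)) in *. set (s := sin (t - theta0)).
  set (E := exp (- kappa / c)) in *.
  assert (HE : 0 < E) by apply exp_pos.
  assert (0 < c * (1 - E * (1 + kappa / c))) by (apply Rmult_lt_0_compat; lra).
  assert (0 <= s ^ 2 * E * kappa ^ 2 / c ^ 3).
  { unfold Rdiv. apply Rmult_le_pos.
    - apply Rmult_le_pos; [apply Rmult_le_pos; [apply pow2_ge_0 | lra] |].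
      apply pow2_ge_0.
    - left. apply Rinv_0_lt_compat, pow_lt. exact Hc. }
  lra.
Qed.

Lemma G_derivable (t : R) :
  theta0 <= t < PI / 2 -> derivable_pt_lim (G kappa theta0) t (G_deriv kappa theta0 t).
Proof. intros Ht. apply is_derive_Reals, G_has_deriv, Rgt_not_eq, cos_shift_pos, Ht. Qed.

Lemma G_deriv_derivable (t : R) :
  theta0 <= t < PI / 2 ->
  derivable_pt_lim (G_deriv kappa theta0) t (G_deriv2 kappa theta0 t).
Proof. intros Ht. apply is_derive_Reals, G_deriv_has_deriv, Rgt_not_eq, cos_shift_pos, Ht. Qed.

(* F' = G'' tan + G' (1 + tan²) - G', which simplifies to F_deriv. *)
Lemma F_derivable (t : R) :
  theta0 <= t < PI / 2 -> derivable_pt_lim (F kappa theta0) t (F_deriv kappa theta0 t).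
Proof.
  intros Ht.
  assert (Htan : derivable_pt_lim tan t (tan t ^ 2 + 1)).
  { apply is_derive_Reals, is_derive_tan, Rgt_not_eq, cos_gt_0; lra. }
  assert (HF := derivable_pt_lim_minus _ _ _ _ _
     (derivable_pt_lim_mult _ _ _ _ _ (G_deriv_derivable t Ht) Htan) (G_derivable t Ht)).
  unfold F_deriv.
  replace (G_deriv2 kappa theta0 t * tan t + G_deriv kappa theta0 t * tan t ^ 2) with
    (G_deriv2 kappa theta0 t * tan t + G_deriv kappa theta0 t * (tan t ^ 2 + 1)
     - G_deriv kappa theta0 t) by ring.
  exact HF.
Qed.

Lemma F_deriv_neg (t : R) : theta0 <= t < PI / 2 -> F_deriv kappa theta0 t < 0.
Proof.
  intros Ht. unfold F_deriv.
  assert (H2 := G_deriv2_neg t Ht). assert (H1 := G_deriv_nonpos t Ht).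
  assert (Htan := tan_pos_on t Ht).
  assert (0 < - G_deriv2 kappa theta0 t * tan t) by (apply Rmult_lt_0_compat; lra).
  assert (0 <= - G_deriv kappa theta0 t * tan t ^ 2)
    by (apply Rmult_le_pos; [lra | apply pow2_ge_0]).
  lra.
Qed.

Lemma F_decreasing (x y : R) :
  theta0 <= x -> x < y -> y < PI / 2 -> F kappa theta0 y < F kappa theta0 x.
Proof. apply (decreasing_of_neg_derivative _ _ _ _ F_derivable F_deriv_neg). Qed.

Lemma G_deriv_decreasing (x y : R) :
  theta0 <= x -> x < y -> y < PI / 2 -> G_deriv kappa theta0 y < G_deriv kappa theta0 x.
Proof. apply (decreasing_of_neg_derivative _ _ _ _ G_deriv_derivable G_deriv2_neg). Qed.

Lemma F_at_theta0 : F kappa theta0 theta0 = exp (- kappa) - 1.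
Proof.
  unfold F, G_deriv, G. rewrite Rminus_diag, sin_0, cos_0, Rdiv_1_r. ring.
Qed.

(* F is unbounded below: pick m strictly inside, so that G'(m) < 0; beyond m,
   F <= G' tan <= G'(m) tan, and tan can be made as large as wanted. *)
Lemma F_unbounded_below (z : R) :
  exists t, theta0 <= t < PI / 2 /\ F kappa theta0 t < z.
Proof.
  set (m := (theta0 + PI / 2) / 2).
  assert (Hm : theta0 < m < PI / 2) by (unfold m; lra).
  assert (Hg : G_deriv kappa theta0 m < 0).
  { unfold G_deriv.
    assert (0 < sin (m - theta0)) by (apply sin_gt_0; lra).
    assert (0 < 1 - exp (- kappa / cos (m - theta0)) * (1 + kappa / cos (m - theta0)))
      by (apply deriv_factor_pos, cos_shift_pos; lra).
    nra. }
  set (g := G_deriv kappa theta0 m) in *.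
  destruct (tan_exceeds m (z / g)) as [t [Ht Htan]]; [lra |].
  exists t. split; [lra |].
  assert (Hgt : G_deriv kappa theta0 t < g) by (apply G_deriv_decreasing; lra).
  assert (HG := G_nonneg t ltac:(lra)).
  assert (Htp := tan_pos_on t ltac:(lra)).
  assert (Hz : g * tan t < z).
  { replace z with (g * (z / g)) by (field; lra).
    apply Rmult_lt_gt_compat_neg_l; lra. }
  unfold F. nra.
Qed.

Lemma F_eq_iff (t z : R) :
  theta0 <= t < PI / 2 -> (F_eq kappa theta0 t z <-> F kappa theta0 t = z).
Proof.
  intros Ht. split.
  - intros [d [Hd Hz]].
    rewrite (uniqueness_limite _ _ _ _ Hd (G_derivable t Ht)) in Hz. exact Hz.
  - intros Hz. exists (G_deriv kappa theta0 t). split; [apply G_derivable, Ht | exact Hz].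
Qed.

End OnTheInterval.

Theorem lemma3p2 (theta0 kappa : R)
  (Htheta0 : 0 < theta0 < PI / 2) (Hkappa : 0 < kappa) :
  forall z : R, z <= exp (- kappa) - 1 ->
    exists! theta : R, (theta0 <= theta < PI / 2) /\ F_eq kappa theta0 theta z.
Proof.
  intros z Hz.
  assert (Hcont : forall t, theta0 <= t < PI / 2 -> continuity_pt (F kappa theta0) t).
  { intros t Ht. apply derivable_continuous_pt.
    exists (F_deriv kappa theta0 t). apply F_derivable; assumption. }
  destruct (decreasing_unique_preimage (F kappa theta0) theta0 (PI / 2) z Hcont
              (F_decreasing kappa theta0 Htheta0 Hkappa))
    as [t [[Ht HFt] Huniq]].
  - rewrite F_at_theta0. exact Hz.
  - apply F_unbounded_below; assumption.
  - exists t. split.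
    + split; [exact Ht |]. apply F_eq_iff; assumption.
    + intros t' [Ht' Heq]. apply Huniq. split; [exact Ht' |].
      apply (F_eq_iff kappa theta0 Htheta0 t' z Ht'), Heq.
Qed.
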